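(* Let $(G,O)$ be an equipped group such that the elements of $O$ generate $G$, and let $\widehat G$ be the associated $C$-group. If $G$ is a perfect group, then $\widehat G$ is isomorphic to the direct product $[\widehat G,\widehat G]\times(\widehat G/[\widehat G,\widehat G])$.
   Context: An equipped group is a pair $(G,O)$, $G$ a group, $O\subset G$ a union of finitely many conjugacy classes, $1\notin O$. The associated $C$-group $\widehat G$ (the $C$-group equivalent to $(G,O)$) is the group with generators $y_g$ ($g\in O$) and relations $y_h^{-1}y_gy_h=y_{h^{-1}gh}$ for all $g,h\in O$. *)

(* Possibly infinite groups are handled concretely:
   - the equipped group G is a type with Leibniz-equality group axioms;
   - the C-group hat G is built from its presentation as words in the
     generators y_g (g in O) and their inverses, modulo the least congruence
     generated by free cancellation and the defining relations;
   - subgroups/quotients of hat G are "setoid groups" (carrier + equivalence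
     relation + operations), and isomorphisms are taken up to these
     equivalences. *)
From Stdlib Require Import List Bool.
Import ListNotations.
Set Implicit Arguments.

Record group := Group {
  gcar :> Type;
  gmul : gcar -> gcar -> gcar;
  ginv : gcar -> gcar;
  gone : gcar;
  gmulA : forall x y z, gmul x (gmul y z) = gmul (gmul x y) z;
  gmul1l : forall x, gmul gone x = x;
  gmulVl : forall x, gmul (ginv x) x = gone }.

Section GroupDefs.
Variable G : group.

Definition gconj (h g : G) : G := gmul G (gmul G (ginv G h) g) h.
Definition gcomm (a b : G) : G :=
  gmul G (gmul G (gmul G (ginv G a) (ginv G b)) a) b.

Definition equipped (O : G -> Prop) : Prop :=
  (exists reps : list G,
     forall x : G, O x <-> exists r h : G, In r reps /\ x = gconj h r)
  /\ ~ O (gone G).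

Definition geval (w : list (G * bool)) : G :=
  fold_right (fun (p : G * bool) (acc : G) => gmul G (if snd p then fst p else ginv G (fst p)) acc)
             (gone G) w.

Definition generates (O : G -> Prop) : Prop :=
  forall x : G, exists w : list (G * bool),
    Forall (fun p => O (fst p)) w /\ x = geval w.

(** G is perfect: G = [G,G], i.e. every element is a product of commutators
    (the inverse of a commutator is a commutator). *)
Definition perfect : Prop :=
  forall x : G, exists l : list (G * G),
    x = fold_right (fun (p : G * G) (acc : G) => gmul G (gcomm (fst p) (snd p)) acc) (gone G) l.
End GroupDefs.

Record sgrp := SGrp {
  sg_car : Type;
  sg_eq : sg_car -> sg_car -> Prop;
  sg_mul : sg_car -> sg_car -> sg_car;
  sg_inv : sg_car -> sg_car;
  sg_one : sg_car }.

Definition sg_iso (A B : sgrp) : Prop :=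
  exists f : sg_car A -> sg_car B,
    (forall x y, sg_eq A x y -> sg_eq B (f x) (f y)) /\
    (forall x y, sg_eq B (f (sg_mul A x y)) (sg_mul B (f x) (f y))) /\
    (forall x y, sg_eq B (f x) (f y) -> sg_eq A x y) /\
    (forall b, exists a, sg_eq B (f a) b).

Definition sg_prod (A B : sgrp) : sgrp :=
  {| sg_car := (sg_car A * sg_car B)%type;
     sg_eq := fun x y => sg_eq A (fst x) (fst y) /\ sg_eq B (snd x) (snd y);
     sg_mul := fun x y => (sg_mul A (fst x) (fst y), sg_mul B (snd x) (snd y));
     sg_inv := fun x => (sg_inv A (fst x), sg_inv B (snd x));
     sg_one := (sg_one A, sg_one B) |}.

Section Hat.
Variable G : group.
Variable O : G -> Prop.

(** a letter (g, true) is y_g, (g, false) is y_g^{-1} *)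
Definition letter := ({g : G | O g} * bool)%type.
Definition word := list letter.

Definition lflip (a : letter) : letter := (fst a, negb (snd a)).
Definition winv (w : word) : word := rev (map lflip w).

(** the congruence defining the presentation: free group relations plus
    y_h^{-1} y_g y_h = y_{h^{-1} g h} for all g, h in O *)
Inductive hrel : word -> word -> Prop :=
| hr_refl u : hrel u u
| hr_sym u v : hrel u v -> hrel v u
| hr_trans u v w : hrel u v -> hrel v w -> hrel u w
| hr_app u u' v v' : hrel u u' -> hrel v v' -> hrel (u ++ v) (u' ++ v')
| hr_free (a : {g : G | O g}) (b : bool) : hrel [(a, b); (a, negb b)] []
| hr_conj (g h k : {g : G | O g}) :
    proj1_sig k = @gconj G (proj1_sig h) (proj1_sig g) ->
    hrel [(h, false); (g, true); (h, true)] [(k, true)].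

Definition hat : sgrp :=
  {| sg_car := word; sg_eq := hrel; sg_mul := @app letter;
     sg_inv := winv; sg_one := [] |}.

Definition wcomm (u v : word) : word := winv u ++ winv v ++ u ++ v.

Inductive hder : word -> Prop :=
| hd_comm u v : hder (wcomm u v)
| hd_one : hder []
| hd_mul u v : hder u -> hder v -> hder (u ++ v)
| hd_inv u : hder u -> hder (winv u)
| hd_eq u v : hrel u v -> hder u -> hder v.

Definition hat_der : sgrp :=
  {| sg_car := {w : word | hder w};
     sg_eq := fun x y => hrel (proj1_sig x) (proj1_sig y);
     sg_mul := fun x y => exist hder (proj1_sig x ++ proj1_sig y)
                         (hd_mul (proj2_sig x) (proj2_sig y));
     sg_inv := fun x => exist hder (winv (proj1_sig x)) (hd_inv (proj2_sig x));
     sg_one := exist hder [] hd_one |}.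

Definition hat_ab : sgrp :=
  {| sg_car := word;
     sg_eq := fun u v => hder (u ++ winv v);
     sg_mul := @app letter; sg_inv := winv; sg_one := [] |}.
End Hat.

(* Let ρ : Ĝ → G be the natural map y_g ↦ g.  By the defining relations,
   conjugating y_a by a word X gives y_b with b = ρ(X)⁻¹ a ρ(X); hence every
   word in ker ρ commutes with all generators, i.e. ker ρ is central.  As G is
   perfect and generated by O, each a ∈ O is ρ(d) for some d ∈ [Ĝ,Ĝ], so
   z_a := d⁻¹ y_a lies in ker ρ, and y_b z_a⁻¹ = (X⁻¹ y_a X y_a⁻¹) d ∈ [Ĝ,Ĝ]
   for every conjugate b = ρ(X)⁻¹ a ρ(X) of a; thus z_a may be chosen constant
   on conjugacy classes.  Since the z_a are central and class functions, y_a ↦ y_a z_a⁻¹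
   respects the defining relations and defines an endomorphism r of Ĝ with
   values in [Ĝ,Ĝ].  Moreover r(w) = w c with c central, so r fixes
   commutators and is a retraction onto [Ĝ,Ĝ]; then w ↦ (r(w), w [Ĝ,Ĝ]) is the
   required isomorphism. *)

From Stdlib Require Import List Bool Setoid Morphisms.
From Stdlib Require Import ClassicalEpsilon ProofIrrelevance.
From Stdlib Require Import FunctionalExtensionality PropExtensionality.
Import ListNotations.
Set Implicit Arguments.

Section GroupTheory.
Variable G : group.
Local Notation "x ** y" := (gmul G x y) (at level 40, left associativity).
Local Notation "1" := (gone G).
Local Notation inv := (ginv G).

Lemma mulgV (x : G) : x ** inv x = 1.
Proof.
  assert (E : x ** inv x = (inv (inv x) ** inv x) ** (x ** inv x))
    by (rewrite gmulVl, gmul1l; reflexivity).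
  rewrite E, <- gmulA, (gmulA G (inv x) x), gmulVl, gmul1l, gmulVl. reflexivity.
Qed.

Lemma mulg1 (x : G) : x ** 1 = x.
Proof. rewrite <- (gmulVl G x), gmulA, mulgV, gmul1l. reflexivity. Qed.

Lemma invg_unique (x y : G) : x ** y = 1 -> inv x = y.
Proof.
  intro H. rewrite <- (mulg1 (inv x)), <- H, gmulA, gmulVl, gmul1l. reflexivity.
Qed.

Lemma invMg (x y : G) : inv (x ** y) = inv y ** inv x.
Proof.
  apply invg_unique. rewrite !gmulA, <- (gmulA G x), mulgV, mulg1, mulgV.
  reflexivity.
Qed.

Lemma invgK (x : G) : inv (inv x) = x.
Proof. apply invg_unique, gmulVl. Qed.

Lemma invg1 : inv 1 = 1.
Proof. apply invg_unique, gmul1l. Qed.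

Lemma gconjM (p q a : G) : gconj G q (gconj G p a) = gconj G (p ** q) a.
Proof. unfold gconj. rewrite invMg, !gmulA. reflexivity. Qed.

Lemma gconj1 (a : G) : gconj G 1 a = a.
Proof. unfold gconj. rewrite invg1, gmul1l, mulg1. reflexivity. Qed.

Lemma gconjVK (h a : G) : gconj G h (gconj G (inv h) a) = a.
Proof. rewrite gconjM, gmulVl. apply gconj1. Qed.
End GroupTheory.

Section Words.
Variable G : group.
Variable O : G -> Prop.
Local Notation W := (word G O).
Local Notation L := (letter G O).

#[export] Instance hrel_equiv : Equivalence (@hrel G O).
Proof.
  split; [intro; apply hr_refl | intros ? ?; apply hr_sym
         | intros ? ? ?; apply hr_trans].
Qed.

#[export] Instance app_hrel_proper :
  Proper (@hrel G O ==> @hrel G O ==> @hrel G O) (@app L).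
Proof. intros ? ? H ? ? H'. apply hr_app; assumption. Qed.

#[export] Instance cons_hrel_proper :
  Proper (eq ==> @hrel G O ==> @hrel G O) (@cons L).
Proof. intros a ? <- ? ? H. apply (hr_app (hr_refl [a]) H). Qed.

Lemma hrel_free_cons a b (w : W) : hrel ((a, b) :: (a, negb b) :: w) w.
Proof. exact (hr_app (hr_free G O a b) (hr_refl w)). Qed.

Lemma hrel_free_cons_neg a b (w : W) : hrel ((a, negb b) :: (a, b) :: w) w.
Proof.
  pose proof (hrel_free_cons a (negb b) w) as H.
  rewrite negb_involutive in H. exact H.
Qed.

Lemma winv_cons (l : L) (u : W) : winv (l :: u) = winv u ++ [lflip l].
Proof. reflexivity. Qed.

Lemma winv_app (u v : W) : winv (u ++ v) = winv v ++ winv u.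
Proof. unfold winv. rewrite map_app, rev_app_distr. reflexivity. Qed.

Lemma winvK (u : W) : winv (winv u) = u.
Proof.
  unfold winv. rewrite map_rev, rev_involutive, map_map.
  induction u as [|[a b] u IH]; simpl; [reflexivity|].
  rewrite IH; destruct b; reflexivity.
Qed.

Lemma hrel_mulwVK (u w : W) : hrel (u ++ winv u ++ w) w.
Proof.
  revert w; induction u as [|[a b] u IH]; intro w; [reflexivity|].
  rewrite winv_cons. simpl. rewrite <- app_assoc, IH. apply hrel_free_cons.
Qed.

Lemma hrel_mulVwK (u w : W) : hrel (winv u ++ u ++ w) w.
Proof.
  revert w; induction u as [|[a b] u IH]; intro w; [reflexivity|].
  rewrite winv_cons, <- app_assoc. simpl. unfold lflip; simpl.
  rewrite hrel_free_cons_neg. apply IH.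
Qed.

Lemma hrel_mulwV (u : W) : hrel (u ++ winv u) [].
Proof. rewrite <- (app_nil_r (winv u)). apply hrel_mulwVK. Qed.

Lemma hrel_mulVw (u : W) : hrel (winv u ++ u) [].
Proof. rewrite <- (app_nil_r u) at 2. apply hrel_mulVwK. Qed.

#[export] Instance winv_hrel_proper : Proper (@hrel G O ==> @hrel G O) (@winv G O).
Proof.
  intros u v H.
  transitivity (winv u ++ v ++ winv v).
  { rewrite hrel_mulwV, app_nil_r. reflexivity. }
  rewrite app_assoc, <- (hr_app (hr_refl (winv u)) H), hrel_mulVw. reflexivity.
Qed.

#[export] Instance wcomm_hrel_proper :
  Proper (@hrel G O ==> @hrel G O ==> @hrel G O) (@wcomm G O).
Proof. intros ? ? H ? ? H'. unfold wcomm. rewrite H, H'. reflexivity. Qed.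

#[export] Instance hder_hrel_proper : Proper (@hrel G O ==> iff) (@hder G O).
Proof. intros u v H; split; apply hd_eq; [exact H | symmetry; exact H]. Qed.

Lemma hder_of_hrel_nil (u : W) : hrel u [] -> hder u.
Proof. intro H. rewrite H. apply hd_one. Qed.
End Words.

Section Evaluation.
Variable G : group.
Variable O : G -> Prop.
Local Notation "x ** y" := (gmul G x y) (at level 40, left associativity).
Local Notation "1" := (gone G).
Local Notation inv := (ginv G).
Local Notation W := (word G O).
Local Notation L := (letter G O).

Definition lval (l : L) : G :=
  if snd l then proj1_sig (fst l) else inv (proj1_sig (fst l)).

Definition wval (w : W) : G := fold_right (fun l acc => lval l ** acc) 1 w.

Lemma wval_app (u v : W) : wval (u ++ v) = wval u ** wval v.
Proof.
  induction u as [|l u IH]; simpl; [rewrite gmul1l | rewrite IH, gmulA]; reflexivity.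
Qed.

Lemma wval_winv (u : W) : wval (winv u) = inv (wval u).
Proof.
  induction u as [|[a b] u IH]; [simpl; rewrite invg1; reflexivity|].
  rewrite winv_cons, wval_app, IH. simpl. rewrite invMg, mulg1.
  unfold lval; destruct b; simpl; rewrite ?invgK; reflexivity.
Qed.

Lemma wval_winv_eq1 (z : W) : wval z = 1 -> wval (winv z) = 1.
Proof. intro Hz. rewrite wval_winv, Hz. apply invg1. Qed.

Lemma gen_eq (a b : {g : G | O g}) : proj1_sig a = proj1_sig b -> a = b.
Proof. destruct a, b; simpl; intros ->. f_equal. apply proof_irrelevance. Qed.
End Evaluation.

Section CentralKernel.
Variable G : group.
Variable O : G -> Prop.
Hypothesis HO : equipped G O.
Local Notation "x ** y" := (gmul G x y) (at level 40, left associativity).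
Local Notation "1" := (gone G).
Local Notation inv := (ginv G).
Local Notation W := (word G O).
Local Notation L := (letter G O).

Lemma equipped_conj_closed (x : G) {g : G} : O g -> O (gconj G x g).
Proof.
  destruct HO as [[reps Hreps] _]. intro Hg. apply Hreps in Hg.
  destruct Hg as [r [h [Hr ->]]]. apply Hreps.
  exists r, (h ** x). split; [assumption | apply gconjM].
Qed.

Definition gen_conj (x : G) (a : {g : G | O g}) : {g : G | O g} :=
  exist O (gconj G x (proj1_sig a)) (equipped_conj_closed x (proj2_sig a)).

Lemma hrel_conj_letter (l : L) (a : {g : G | O g}) (w : W) :
  hrel (lflip l :: (a, true) :: l :: w) ((gen_conj (lval l) a, true) :: w).
Proof.
  destruct l as [h [|]]; simpl.
  - exact (hr_app (hr_conj G O a h (gen_conj _ a) eq_refl) (hr_refl w)).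
  - set (k := gen_conj (inv (proj1_sig h)) a).
    assert (Hk : proj1_sig a = gconj G (proj1_sig h) (proj1_sig k))
      by (symmetry; apply gconjVK).
    rewrite <- (hrel_free_cons_neg h false w) at 2.
    rewrite <- (hr_app (hr_conj G O k h a Hk) (hr_refl ((h, false) :: w))). simpl.
    rewrite (hrel_free_cons h true). reflexivity.
Qed.

Lemma hrel_conj_word (X : W) (a : {g : G | O g}) (w : W) :
  hrel (winv X ++ (a, true) :: X ++ w) ((gen_conj (wval X) a, true) :: w).
Proof.
  revert a; induction X as [|l X IH]; intro a.
  - simpl. replace (gen_conj 1 a) with a; [reflexivity|].
    apply gen_eq. symmetry. apply gconj1.
  - rewrite winv_cons, <- app_assoc. simpl. rewrite hrel_conj_letter, IH.
    replace (gen_conj (wval X) (gen_conj (lval l) a))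
      with (gen_conj (lval l ** wval X) a); [reflexivity|].
    apply gen_eq. simpl. symmetry. apply gconjM.
Qed.

Lemma ker_wval_commute_letter (z : W) : wval z = 1 ->
  forall (l : L) (w : W), hrel (l :: z ++ w) (z ++ l :: w).
Proof.
  intro Hz.
  assert (Hpos : forall a (w : W), hrel ((a, true) :: z ++ w) (z ++ (a, true) :: w)).
  { intros a w. rewrite <- (hrel_mulwVK z ((a, true) :: z ++ w)), hrel_conj_word.
    replace (gen_conj (wval z) a) with a; [reflexivity|].
    apply gen_eq. rewrite Hz. symmetry. apply gconj1. }
  intros [a [|]] w; [apply Hpos|].
  transitivity ((a, false) :: z ++ (a, true) :: (a, false) :: w).
  { rewrite (hrel_free_cons a true w). reflexivity. }
  rewrite <- Hpos. apply (hrel_free_cons_neg a true).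
Qed.

Lemma ker_wval_central (z : W) : wval z = 1 ->
  forall u w : W, hrel (u ++ z ++ w) (z ++ u ++ w).
Proof.
  intros Hz u w. induction u as [|l u IH]; [reflexivity|].
  simpl. rewrite IH. apply ker_wval_commute_letter, Hz.
Qed.

Lemma wcomm_mul_ker (u v c1 c2 : W) : wval c1 = 1 -> wval c2 = 1 ->
  hrel (wcomm (u ++ c1) (v ++ c2)) (wcomm u v).
Proof.
  intros H1 H2. unfold wcomm. rewrite !winv_app, <- !app_assoc.
  assert (H2' : wval (winv c2) = 1) by (apply wval_winv_eq1, H2).
  transitivity (winv c1 ++ c1 ++ winv u ++ winv c2 ++ winv v ++ u ++ v ++ c2).
  { apply hr_app; [reflexivity|].
    pose proof (ker_wval_central c1 H1 (winv u ++ winv c2 ++ winv v ++ u) (v ++ c2)) as C.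
    rewrite <- !app_assoc in C. exact C. }
  rewrite hrel_mulVwK, (ker_wval_central _ H2' (winv u)).
  pose proof (ker_wval_central c2 H2 (winv u ++ winv v ++ u ++ v) []) as C.
  rewrite <- !app_assoc, app_nil_r in C. rewrite C, app_nil_r, hrel_mulVwK. reflexivity.
Qed.
End CentralKernel.

Section Retraction.
Variable G : group.
Variable O : G -> Prop.
Hypothesis HO : equipped G O.
Hypothesis Hgen : generates G O.
Hypothesis Hperf : perfect G.
Local Notation "x ** y" := (gmul G x y) (at level 40, left associativity).
Local Notation "1" := (gone G).
Local Notation inv := (ginv G).
Local Notation W := (word G O).
Local Notation L := (letter G O).

Lemma wval_surj (x : G) : exists X : W, wval X = x.
Proof.
  destruct (Hgen x) as [w [Hw ->]].
  induction Hw as [|[g b] w Hg Hw [X HX]]; [exists []; reflexivity|].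
  exists ((exist O g Hg, b) :: X). simpl. rewrite HX. destruct b; reflexivity.
Qed.

Lemma wval_der_surj (x : G) : exists w : W, hder w /\ wval w = x.
Proof.
  destruct (Hperf x) as [l ->].
  induction l as [|[a b] l [w [Hw Hwx]]]; [exists []; split; [apply hd_one | reflexivity]|].
  destruct (wval_surj a) as [A <-]. destruct (wval_surj b) as [B <-].
  exists (wcomm A B ++ w). split; [apply hd_mul; [apply hd_comm | assumption]|].
  unfold wcomm. rewrite !wval_app, !wval_winv, Hwx. unfold gcomm. simpl.
  rewrite !gmulA. reflexivity.
Qed.

Definition correction_for (C : G -> Prop) (z : W) : Prop :=
  wval z = 1 /\ forall b : {g : G | O g}, C (proj1_sig b) -> hder ((b, true) :: winv z).

Definition conj_class (g : G) : G -> Prop := fun g' => exists x, g' = gconj G x g.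

(* Choosing through the class predicate, rather than through [a], makes
   [correction] literally constant on conjugacy classes ([correction_conj]). *)
Definition correction (a : {g : G | O g}) : W :=
  epsilon (inhabits []) (correction_for (conj_class (proj1_sig a))).

Lemma correctionP (a : {g : G | O g}) :
  correction_for (conj_class (proj1_sig a)) (correction a).
Proof.
  unfold correction. apply epsilon_spec.
  destruct (wval_der_surj (proj1_sig a)) as [d [Hd Hda]].
  exists (winv d ++ [(a, true)]). split.
  { rewrite wval_app, wval_winv, Hda. simpl. rewrite mulg1. apply gmulVl. }
  intros b [x Hb]. destruct (wval_surj x) as [X <-].
  replace b with (gen_conj HO (wval X) a) by (apply gen_eq; symmetry; exact Hb).
  rewrite winv_app, winvK. simpl.
  apply (hd_eq (u := wcomm X [(a, false)] ++ d));
    [| apply hd_mul; [apply hd_comm | assumption]].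
  unfold wcomm. rewrite <- !app_assoc. cbn [app lflip fst snd negb].
  exact (hrel_conj_word HO X a _).
Qed.

Lemma correction_ker (a : {g : G | O g}) : wval (correction a) = 1.
Proof. apply correctionP. Qed.

Lemma correction_conj (g h k : {g : G | O g}) :
  proj1_sig k = gconj G (proj1_sig h) (proj1_sig g) -> correction k = correction g.
Proof.
  intro Hk. unfold correction. do 2 f_equal. rewrite Hk.
  apply functional_extensionality. intro y. apply propositional_extensionality.
  split; intros [x ->].
  - exists (proj1_sig h ** x). apply gconjM.
  - exists (inv (proj1_sig h) ** x).
    rewrite gconjM, gmulA, mulgV, gmul1l. reflexivity.
Qed.

Definition lretr (l : L) : W :=
  let a := fst l in
  if snd l then (a, true) :: winv (correction a) else correction a ++ [(a, false)].

Definition retr (w : W) : W := fold_right (fun l acc => lretr l ++ acc) [] w.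

Lemma retr_cons (l : L) (u : W) : retr (l :: u) = lretr l ++ retr u.
Proof. reflexivity. Qed.

Lemma retr_app (u v : W) : retr (u ++ v) = retr u ++ retr v.
Proof. induction u as [|l u IH]; simpl; [|rewrite IH, app_assoc]; reflexivity. Qed.

Lemma retr_winv (u : W) : retr (winv u) = winv (retr u).
Proof.
  induction u as [|[a b] u IH]; [reflexivity|].
  rewrite winv_cons, retr_app, IH. simpl. rewrite winv_app, app_nil_r. f_equal.
  unfold lretr, lflip; destruct b; simpl.
  - rewrite winv_cons, winvK. reflexivity.
  - rewrite winv_app. reflexivity.
Qed.

Lemma retr_hrel (u v : W) : hrel u v -> hrel (retr u) (retr v).
Proof.
  induction 1 as [| |u v w _ IH1 _ IH2|u u' v v' _ IH1 _ IH2|a b|g h k Hk].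
  - reflexivity.
  - symmetry; assumption.
  - rewrite IH1; exact IH2.
  - rewrite !retr_app, IH1, IH2. reflexivity.
  - destruct b; unfold retr, lretr; simpl; rewrite ?app_nil_r.
    + rewrite hrel_mulVwK. apply (hrel_free_cons a true).
    + rewrite <- app_assoc. simpl. rewrite (hrel_free_cons_neg a true). apply hrel_mulwV.
  - unfold retr, lretr; simpl. rewrite (correction_conj _ _ _ Hk), !app_nil_r, <- app_assoc.
    simpl. set (zh := correction h). set (zg := winv (correction g)).
    assert (Hzg : wval zg = 1) by apply wval_winv_eq1, correction_ker.
    rewrite <- (ker_wval_commute_letter HO _ Hzg (h, true) (winv zh)).
    change (hrel (zh ++ ([(h, false); (g, true); (h, true)] ++ zg) ++ winv zh)
                 ((k, true) :: zg)).
    rewrite <- (ker_wval_central HO zh (correction_ker h)), hrel_mulwV, app_nil_r.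
    exact (hr_app (hr_conj G O g h k Hk) (hr_refl zg)).
Qed.

Lemma retr_hder (w : W) : hder (retr w).
Proof.
  assert (Hletter_der : forall a, hder ((a, true) :: winv (correction a))).
  { intro a. apply (proj2 (correctionP a)). exists 1. symmetry. apply gconj1. }
  induction w as [|[a b] w IH]; [apply hd_one|].
  simpl. apply hd_mul; [|assumption]. unfold lretr; destruct b; simpl; [apply Hletter_der|].
  replace (correction a ++ [(a, false)]) with (winv ((a, true) :: winv (correction a)))
    by (rewrite winv_cons, winvK; reflexivity).
  apply hd_inv, Hletter_der.
Qed.

Lemma retr_hrel_mul_ker (u : W) : exists c : W, wval c = 1 /\ hrel (retr u) (u ++ c).
Proof.
  induction u as [|[a b] u [c [Hc IH]]]; [exists []; split; reflexivity|].
  destruct b.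
  - assert (Hz : wval (winv (correction a)) = 1)
      by apply wval_winv_eq1, correction_ker.
    exists (winv (correction a) ++ c).
    split; [rewrite wval_app, Hz, Hc; apply gmul1l|].
    rewrite retr_cons, IH. simpl.
    rewrite (ker_wval_central HO _ Hz u c). reflexivity.
  - exists (correction a ++ c).
    split; [rewrite wval_app, correction_ker, Hc; apply gmul1l|].
    rewrite retr_cons, IH. unfold lretr. simpl. rewrite <- app_assoc. symmetry.
    exact (ker_wval_central HO _ (correction_ker a) ((a, false) :: u) c).
Qed.

Lemma retr_hder_id (w : W) : hder w -> hrel (retr w) w.
Proof.
  induction 1 as [u v| |u v _ IH1 _ IH2|u _ IH|u v Huv _ IH].
  - unfold wcomm. rewrite !retr_app, !retr_winv. fold (wcomm (retr u) (retr v)).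
    destruct (retr_hrel_mul_ker u) as [c1 [H1 ->]].
    destruct (retr_hrel_mul_ker v) as [c2 [H2 ->]].
    apply (wcomm_mul_ker HO); assumption.
  - reflexivity.
  - rewrite retr_app, IH1, IH2. reflexivity.
  - rewrite retr_winv, IH. reflexivity.
  - transitivity (retr u); [symmetry; apply retr_hrel, Huv | rewrite IH; exact Huv].
Qed.

Lemma retr_ab_inj (x y : W) :
  hrel (retr x) (retr y) -> hder (x ++ winv y) -> hrel x y.
Proof.
  intros Hr Hd.
  assert (Hxy : hrel (x ++ winv y) []).
  { rewrite <- (retr_hder_id Hd), retr_app, retr_winv, Hr. apply hrel_mulwV. }
  transitivity ((x ++ winv y) ++ y).
  - rewrite <- app_assoc, hrel_mulVw, app_nil_r. reflexivity.
  - rewrite Hxy. reflexivity.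
Qed.

Lemma retr_ab_surj (d a : W) : hder d ->
  hrel (retr (d ++ winv (retr a) ++ a)) d /\ hder ((d ++ winv (retr a) ++ a) ++ winv a).
Proof.
  intro Hd. split.
  - rewrite !retr_app, retr_winv, (retr_hder_id (retr_hder a)), hrel_mulVw, app_nil_r.
    apply retr_hder_id, Hd.
  - rewrite <- !app_assoc, hrel_mulwV, app_nil_r.
    apply hd_mul; [assumption | apply hd_inv, retr_hder].
Qed.
End Retraction.

Theorem proposition2p14 (G : group) (O : G -> Prop)
  (HO : @equipped G O) (Hgen : @generates G O) (Hperf : perfect G) :
  sg_iso (@hat G O) (sg_prod (@hat_der G O) (@hat_ab G O)).
Proof.
  exists (fun w => (exist (@hder G O) (retr w) (retr_hder HO Hgen Hperf w), w)).
  simpl. split; [|split; [|split]].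
  - intros x y H. split; [exact (retr_hrel HO Hgen Hperf H)|].
    apply hder_of_hrel_nil. rewrite H. apply hrel_mulwV.
  - intros x y. split; [rewrite retr_app; reflexivity|].
    apply hder_of_hrel_nil, hrel_mulwV.
  - intros x y [Hr Hd]. exact (retr_ab_inj HO Hgen Hperf x y Hr Hd).
  - intros [[d Hd] a]. exists (d ++ winv (retr a) ++ a).
    exact (retr_ab_surj HO Hgen Hperf a Hd).
Qed.
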